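(* In the signal design problem described in the context, define the congestion level $\chi=\frac{\min\{Vk_0,C\}}{\min\{C,(K-k_0)W\}}$. Then the optimal cycle lengths are: (1) Very sparse traffic, $\chi\in[0,\pi_0)$: multiple optimal cycle lengths $T^*=\frac1{j_1}\frac LV$ for positive integers $j_1$ with $Vk_0\le(1-\frac{2\delta}{T^*})\pi_0C$. (2) Sparse traffic, $\chi\in[\pi_0,1)$: a unique optimal cycle length $T^*=\chi\frac{L}{\pi_0V}+2\delta$. (3) Critical traffic, $\chi=1$: a unique optimal cycle length $T^*=\infty$. (4) Dense traffic, $\chi\in(1,\frac1{\pi_0}]$: a unique optimal cycle length $T^*=\frac1\chi\frac{L}{\pi_0W}+2\delta$. (5) Very dense traffic, $\chi\in(\frac1{\pi_0},\infty)$: multiple optimal cycle lengths $T^*=\frac1{j_2}\frac LW$ for positive integers $j_2$ with $(K-k_0)W\le(1-\frac{2\delta}{T^*})\pi_0C$.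
   Context: Signalized ring road of length $L>0$ with LWR traffic, triangular fundamental diagram $Q(k)=\min\{Vk,(K-k)W\}$, $\bar K=\frac{W}{V+W}K$, $C=V\bar K$, average density $k_0\in[0,K]$, pretimed two-phase signal with cycle length $T$. With a start-up lost time $\delta>0$ per phase and a fixed allocation ratio $\pi_0\in(0,1)$, the effective green ratio is $\pi=(1-\frac{2\delta}T)\pi_0$, $T\ge2\delta$. In stationary states the average flow-rate is $\bar g=\min\{\phi_1,\pi C,\phi_2\}$ with $\phi_1=\frac{k_0}{k_1}\pi C$, $\phi_2=\frac{K-k_0}{K-k_2}\pi C$, where $\frac LV=(j_1+\alpha_1)T$, $j_1=\lfloor L/(VT)\rfloor$, $0\le\alpha_1<1$, $\frac LW=(j_2+\alpha_2)T$, $j_2=\lfloor L/(WT)\rfloor$, $0\le\alpha_2<1$, $k_1=\frac{j_1+\min\{\alpha_1/\pi,1\}}{j_1+\alpha_1}\pi\bar K$, $k_2=K-\frac{j_2+\min\{\alpha_2/\pi,1\}}{j_2+\alpha_2}\pi\frac CW$. Assuming $L/V$ and $L/W$ are much larger than $2\delta$, $\pi$ is replaced by $\pi_0$ in $\phi_1,\phi_2$ (but not in the term $\pi C=(1-\frac{2\delta}T)\pi_0C$); an optimal cycle length is a maximizer over $T\ge2\delta$ of $\min\{\phi_1,(1-\frac{2\delta}T)\pi_0C,\phi_2\}$. *)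

From Stdlib Require Import Reals.
Open Scope R_scope.

(* Triangular fundamental diagram constants. *)
Definition Kbar (V W K : R) : R := W / (V + W) * K.
Definition Cap (V W K : R) : R := V * Kbar V W K.

Definition jfl (x : R) : R := IZR (Int_part x).
Definition alf (x : R) : R := frac_part x.

(* Critical densities, with pi replaced by pi0 (standing assumption). *)
Definition k1 (L V W K pi0 T : R) : R :=
  let x := L / (V * T) in
  (jfl x + Rmin (alf x / pi0) 1) / (jfl x + alf x) * pi0 * Kbar V W K.
Definition k2 (L V W K pi0 T : R) : R :=
  let x := L / (W * T) in
  K - (jfl x + Rmin (alf x / pi0) 1) / (jfl x + alf x) * pi0 * (Cap V W K / W).

Definition phi1 (L V W K k0 pi0 T : R) : R :=
  k0 / k1 L V W K pi0 T * pi0 * Cap V W K.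
Definition phi2 (L V W K k0 pi0 T : R) : R :=
  (K - k0) / (K - k2 L V W K pi0 T) * pi0 * Cap V W K.

Definition gbar (L V W K k0 delta pi0 T : R) : R :=
  Rmin (Rmin (phi1 L V W K k0 pi0 T) ((1 - 2 * delta / T) * pi0 * Cap V W K))
       (phi2 L V W K k0 pi0 T).

Definition optimal_cycle (L V W K k0 delta pi0 T : R) : Prop :=
  2 * delta <= T /\
  forall T', 2 * delta <= T' -> gbar L V W K k0 delta pi0 T' <= gbar L V W K k0 delta pi0 T.

Definition chi (V W K k0 : R) : R :=
  Rmin (V * k0) (Cap V W K) / Rmin (Cap V W K) ((K - k0) * W).

(* "T* = infinity is the unique optimal cycle length": the objective has a
   supremum l which it approaches as T -> +oo, while on every bounded range
   [2 delta, M] it stays uniformly below l (so no finite T is optimal). *)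
Definition optimal_at_infinity (f : R -> R) (delta : R) : Prop :=
  exists l : R,
    (forall T, 2 * delta <= T -> f T <= l) /\
    (forall M, exists eps, 0 < eps /\ forall T, 2 * delta <= T <= M -> f T <= l - eps) /\
    (forall eps, 0 < eps -> exists M, forall T, M <= T -> l - eps < f T).

(* Write x = L / (U T) for the travel time around the ring in cycles (U = V or W).
   Then [phi1] and [phi2] are the demands V k0 and (K - k0) W times a ratio
   x / (floor x + min (frac x / pi0) 1), which lies in [pi0, 1], equals 1 exactly
   at integer x, and equals max pi0 x on (0, 1).  Since the ratio is at least pi0,
   the [phi] on the side where demand exceeds capacity C never binds, so [gbar] is
   min (a ratio, (1 - 2 delta / T) pi0 C) for the other demand a.  If a < pi0 C,
   the value a is an upper bound, attained for long rings exactly at the cycles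
   L / (j U) that leave enough green.  If pi0 C <= a < C, the lost-time term
   increases in T while a x decreases, and they cross at the single cycle
   a / C * L / (pi0 U) + 2 delta.  At critical density only the lost-time term
   remains; it increases towards pi0 C without reaching it. *)

From Stdlib Require Import Reals Lra Lia ZArith.
Open Scope R_scope.

Definition effective_cycles (pi0 x : R) : R := jfl x + Rmin (alf x / pi0) 1.

Definition throughput_ratio (pi0 x : R) : R := x / effective_cycles pi0 x.

Lemma jfl_add_alf x : jfl x + alf x = x.
Proof. unfold jfl, alf, frac_part. ring. Qed.

Lemma jfl_nonneg x : 0 <= x -> 0 <= jfl x.
Proof.
  intros Hx. unfold jfl. destruct (base_Int_part x) as [_ Hlow].
  assert (Hz : (-1 < Int_part x)%Z) by (apply lt_IZR; lra).
  apply IZR_le. lia.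
Qed.

Lemma jfl_lt_1 x : 0 <= x < 1 -> jfl x = 0.
Proof.
  intros Hx. pose proof (jfl_nonneg x ltac:(lra)) as Hj.
  destruct (base_Int_part x) as [Hup _]. unfold jfl in *.
  assert (Hz : (Int_part x < 1)%Z) by (apply lt_IZR; lra).
  apply le_IZR in Hj. replace (Int_part x) with 0%Z by lia. reflexivity.
Qed.

Lemma alf_bounds x : 0 <= alf x < 1.
Proof. unfold alf. destruct (base_fp x). lra. Qed.

Lemma effective_cycles_bounds pi0 x : 0 < pi0 < 1 -> 0 < x ->
  pi0 * effective_cycles pi0 x <= x <= effective_cycles pi0 x.
Proof.
  intros Hp Hx. unfold effective_cycles.
  pose proof (jfl_add_alf x). pose proof (jfl_nonneg x ltac:(lra)).
  pose proof (alf_bounds x).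
  assert (Hdiv : pi0 * (alf x / pi0) = alf x) by (field; lra).
  unfold Rmin; destruct (Rle_dec (alf x / pi0) 1); split; nra.
Qed.

Lemma effective_cycles_pos pi0 x : 0 < pi0 < 1 -> 0 < x -> 0 < effective_cycles pi0 x.
Proof. intros Hp Hx. pose proof (effective_cycles_bounds pi0 x Hp Hx). lra. Qed.

Lemma throughput_ratio_bounds pi0 x : 0 < pi0 < 1 -> 0 < x ->
  pi0 <= throughput_ratio pi0 x <= 1.
Proof.
  intros Hp Hx. pose proof (effective_cycles_bounds pi0 x Hp Hx) as Hm.
  pose proof (effective_cycles_pos pi0 x Hp Hx) as Hm0.
  unfold throughput_ratio. set (m := effective_cycles pi0 x) in *.
  assert (Hr : x / m * m = x) by (field; lra).
  split; nra.
Qed.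

Lemma throughput_ratio_eq_1 pi0 x : 0 < pi0 < 1 -> 0 < x ->
  throughput_ratio pi0 x = 1 <-> exists n, (0 < n)%nat /\ x = INR n.
Proof.
  intros Hp Hx. pose proof (effective_cycles_pos pi0 x Hp Hx) as Hm0.
  unfold throughput_ratio, effective_cycles in *.
  pose proof (jfl_add_alf x). pose proof (alf_bounds x).
  split.
  - intros Hr.
    assert (Hm : x = jfl x + Rmin (alf x / pi0) 1).
    { apply (Rmult_eq_reg_r (/ (jfl x + Rmin (alf x / pi0) 1)));
        [rewrite Rinv_r; lra | apply Rinv_neq_0_compat; lra]. }
    assert (Ha : alf x = 0).
    { destruct (Req_dec (alf x) 0) as [|Hne]; auto.
      assert (alf x < alf x / pi0).
      { apply (Rmult_lt_reg_l pi0); [lra|]. field_simplify; [|lra]. nra. }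
      unfold Rmin in Hm; destruct (Rle_dec (alf x / pi0) 1); lra. }
    assert (Hz : (0 < Int_part x)%Z) by (apply lt_IZR; unfold jfl in *; lra).
    exists (Z.to_nat (Int_part x)). split; [lia|].
    rewrite INR_IZR_INZ, Z2Nat.id by lia. unfold jfl in *. lra.
  - intros (n & Hn & ->).
    assert (0 < INR n) by (apply lt_0_INR; lia).
    unfold jfl, alf, frac_part. rewrite Int_part_INR, <- INR_IZR_INZ.
    replace ((INR n - INR n) / pi0) with 0 by (field; lra).
    rewrite Rmin_left by lra. field. lra.
Qed.

Lemma throughput_ratio_lt_1 pi0 x : 0 < pi0 < 1 -> 0 < x < 1 ->
  throughput_ratio pi0 x = Rmax pi0 x.
Proof.
  intros Hp Hx. unfold throughput_ratio, effective_cycles, alf.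
  rewrite (jfl_lt_1 x), (Rplus_0_l (Rmin _ _)) by lra.
  assert (Hf : frac_part x = x).
  { pose proof (jfl_add_alf x) as E. rewrite (jfl_lt_1 x) in E by lra.
    unfold alf in E. lra. }
  rewrite Hf. assert (Hq : x / pi0 * pi0 = x) by (field; lra).
  destruct (Rle_dec x pi0).
  - rewrite Rmax_left, Rmin_left by nra. field. lra.
  - rewrite Rmax_right, Rmin_right by nra. field.
Qed.

Definition maximizer_from (lo : R) (f : R -> R) (T : R) : Prop :=
  lo <= T /\ forall T', lo <= T' -> f T' <= f T.

Lemma maximizer_from_ext lo f g T : (forall T, lo <= T -> f T = g T) ->
  maximizer_from lo f T <-> maximizer_from lo g T.
Proof.
  intros Hfg. unfold maximizer_from.
  split; intros [Hlo Hmax]; split; auto; intros T' HT'.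
  - rewrite <- !Hfg; auto.
  - rewrite !Hfg; auto.
Qed.

Lemma maximizer_from_bound lo f M T0 :
  (forall T, lo <= T -> f T <= M) -> lo <= T0 -> f T0 = M ->
  forall T, maximizer_from lo f T <-> lo <= T /\ f T = M.
Proof.
  intros Hbound HT0 Hf0 T. split.
  - intros [HT Hmax]. specialize (Hmax T0 HT0). specialize (Hbound T HT). split; lra.
  - intros [HT HfT]. split; auto. intros T' HT'. rewrite HfT. auto.
Qed.

Lemma maximizer_from_strict lo f T0 :
  lo <= T0 -> (forall T, lo <= T -> T <> T0 -> f T < f T0) ->
  forall T, maximizer_from lo f T <-> T = T0.
Proof.
  intros HT0 Hstrict T. split.
  - intros [HT Hmax]. destruct (Req_dec T T0) as [|Hne]; auto.
    specialize (Hmax T0 HT0). specialize (Hstrict T HT Hne). lra.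
  - intros ->. split; auto. intros T' HT'.
    destruct (Req_dec T' T0) as [->|Hne]; [lra|].
    left. auto.
Qed.

(* [gbar] with its non-binding [phi] dropped: [a] is the demand [V k0] or
   [(K - k0) W] and [U] the matching wave speed [V] or [W]. *)
Definition reduced_flow (a U c delta pi0 L T : R) : R :=
  Rmin (a * throughput_ratio pi0 (L / (U * T))) ((1 - 2 * delta / T) * pi0 * c).

Section ReducedFlow.

Variables (a U c delta pi0 : R).
Hypotheses (Ha : 0 < a) (Hc : 0 < c) (HU : 0 < U) (Hdelta : 0 < delta) (Hpi0 : 0 < pi0 < 1).

Lemma lost_time_le_of_demand_le_green T : 0 < T ->
  a <= (1 - 2 * delta / T) * pi0 * c -> 2 * delta <= T.
Proof.
  intros HT Hgreen. assert (Hd : 2 * delta / T * T = 2 * delta) by (field; lra).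
  assert (0 < pi0 * c) by nra. nra.
Qed.

Lemma reduced_flow_le_demand L T : 0 < L -> 0 < T -> reduced_flow a U c delta pi0 L T <= a.
Proof.
  intros HL HT. unfold reduced_flow. eapply Rle_trans; [apply Rmin_l|].
  assert (Hx : 0 < L / (U * T)) by (apply Rdiv_lt_0_compat; nra).
  pose proof (throughput_ratio_bounds pi0 _ Hpi0 Hx). nra.
Qed.

Lemma reduced_flow_eq_demand L T : 0 < L -> 0 < T ->
  reduced_flow a U c delta pi0 L T = a <->
  (exists j, (0 < j)%nat /\ T = / INR j * (L / U)) /\ a <= (1 - 2 * delta / T) * pi0 * c.
Proof.
  intros HL HT. assert (Hx : 0 < L / (U * T)) by (apply Rdiv_lt_0_compat; nra).
  pose proof (throughput_ratio_bounds pi0 _ Hpi0 Hx) as Hr.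
  assert (Hjn : forall j, (0 < j)%nat -> T = / INR j * (L / U) <-> L / (U * T) = INR j).
  { intros j Hj. assert (0 < INR j) by (apply lt_0_INR; lia).
    split; intros E; [rewrite E | rewrite <- E]; field; repeat split; nra. }
  unfold reduced_flow. split.
  - intros Hmin. pose proof (Rmin_l (a * throughput_ratio pi0 (L / (U * T)))
      ((1 - 2 * delta / T) * pi0 * c)) as Hl.
    pose proof (Rmin_r (a * throughput_ratio pi0 (L / (U * T)))
      ((1 - 2 * delta / T) * pi0 * c)) as Hrt.
    split; [|lra].
    destruct (throughput_ratio_eq_1 pi0 _ Hpi0 Hx) as [Hn _].
    assert (Hone : throughput_ratio pi0 (L / (U * T)) = 1) by nra.
    destruct (Hn Hone) as (j & Hj & Ej). exists j. split; auto. apply Hjn; auto.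
  - intros [(j & Hj & Ej) Hgreen].
    apply Hjn in Ej; auto.
    rewrite (proj2 (throughput_ratio_eq_1 pi0 _ Hpi0 Hx)) by eauto.
    rewrite Rmult_1_r. apply Rmin_left. exact Hgreen.
Qed.

Lemma reduced_flow_maximizers_light : a < pi0 * c ->
  exists L0, 0 < L0 /\ forall L, L0 <= L -> forall T,
    maximizer_from (2 * delta) (reduced_flow a U c delta pi0 L) T <->
    exists j, (0 < j)%nat /\ T = / INR j * (L / U) /\ a <= (1 - 2 * delta / T) * pi0 * c.
Proof.
  intros Hlight.
  assert (HL0 : 0 < 2 * delta * U * pi0 * c / (pi0 * c - a))
    by (apply Rdiv_lt_0_compat; [repeat apply Rmult_lt_0_compat|]; lra).
  exists (2 * delta * U * pi0 * c / (pi0 * c - a)). split; [exact HL0|].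
  intros L HL T.
  assert (HLpos : 0 < L) by lra.
  assert (HLU : 0 < L / U) by (apply Rdiv_lt_0_compat; lra).
  (* The threshold on [L] is what leaves enough green to [a] at the cycle [L / U]. *)
  assert (Hone_trip : a <= (1 - 2 * delta / (L / U)) * pi0 * c).
  { apply (Rmult_le_compat_r (pi0 * c - a)) in HL; [|lra].
    replace (2 * delta * U * pi0 * c / (pi0 * c - a) * (pi0 * c - a))
      with (2 * delta * U * pi0 * c) in HL by (field; lra).
    replace ((1 - 2 * delta / (L / U)) * pi0 * c) with (pi0 * c - 2 * delta * U * pi0 * c / L)
      by (field; lra).
    assert (Hq : 2 * delta * U * pi0 * c / L * L = 2 * delta * U * pi0 * c) by (field; lra).
    nra. }
  assert (Hvalue : reduced_flow a U c delta pi0 L (L / U) = a).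
  { apply reduced_flow_eq_demand; auto. split; auto.
    exists 1%nat. split; [lia|]. simpl. field. lra. }
  rewrite (maximizer_from_bound _ _ a (L / U)); auto.
  - split.
    + intros [HT Hf]. apply reduced_flow_eq_demand in Hf; [|lra|lra].
      destruct Hf as [(j & Hj & Ej) Hgreen]. exists j. auto.
    + intros (j & Hj & Ej & Hgreen).
      assert (HT : 0 < T) by (rewrite Ej; apply Rmult_lt_0_compat;
        [apply Rinv_0_lt_compat, lt_0_INR; lia | lra]).
      split; [apply lost_time_le_of_demand_le_green; auto|].
      apply reduced_flow_eq_demand; eauto.
  - intros T' HT'. apply reduced_flow_le_demand; lra.
  - apply lost_time_le_of_demand_le_green; auto.
Qed.

Definition balanced_cycle (L : R) : R := a / c * (L / (pi0 * U)) + 2 * delta.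

Lemma balanced_cycle_gt_lost_time L : 0 < L -> 2 * delta < balanced_cycle L.
Proof.
  intros HL. unfold balanced_cycle.
  assert (0 < a / c * (L / (pi0 * U)))
    by (apply Rmult_lt_0_compat; apply Rdiv_lt_0_compat; nra).
  lra.
Qed.

Lemma balanced_cycle_balance L : 0 < L ->
  (1 - 2 * delta / balanced_cycle L) * pi0 * c = a * (L / (U * balanced_cycle L)).
Proof.
  intros HL. pose proof (balanced_cycle_gt_lost_time L HL) as HTs.
  assert (Hgap : balanced_cycle L - 2 * delta = a / c * (L / (pi0 * U)))
    by (unfold balanced_cycle; ring).
  replace (1 - 2 * delta / balanced_cycle L)
    with ((balanced_cycle L - 2 * delta) / balanced_cycle L) by (field; lra).
  rewrite Hgap. field. repeat split; lra.
Qed.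

Lemma balanced_cycle_trips L : pi0 * c <= a < c -> 2 * delta * U * c <= L * (c - a) ->
  pi0 < L / (U * balanced_cycle L) < 1.
Proof.
  intros [Hlow Hhigh] HLlong.
  assert (HL : 0 < L) by (assert (0 < 2 * delta * U * c) by
    (repeat apply Rmult_lt_0_compat; lra); nra).
  pose proof (balanced_cycle_gt_lost_time L HL) as HTs.
  set (Ts := balanced_cycle L) in *.
  assert (HUTs : 0 < U * Ts) by nra.
  assert (Hcycle : U * Ts * (pi0 * c) = a * L + 2 * delta * U * (pi0 * c))
    by (unfold Ts, balanced_cycle; field; lra).
  assert (Hxs : L / (U * Ts) * (U * Ts) = L) by (field; lra).
  split.
  - assert (0 < delta * U * c) by (repeat apply Rmult_lt_0_compat; lra).
    assert (pi0 * (U * Ts) * c < L * c) by nra.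
    assert (pi0 * (U * Ts) < L) by (apply (Rmult_lt_reg_r c); lra).
    nra.
  - assert (L * (pi0 * c) <= L * a) by (apply Rmult_le_compat_l; lra).
    assert (0 < 2 * delta * U * (pi0 * c)) by (repeat apply Rmult_lt_0_compat; lra).
    assert (L < U * Ts) by (apply (Rmult_lt_reg_r (pi0 * c)); nra).
    nra.
Qed.

Lemma reduced_flow_maximizer_moderate : pi0 * c <= a < c ->
  exists L0, 0 < L0 /\ forall L, L0 <= L -> forall T,
    maximizer_from (2 * delta) (reduced_flow a U c delta pi0 L) T <-> T = balanced_cycle L.
Proof.
  intros Hmoderate.
  assert (HL0 : 0 < 2 * delta * U * c / (c - a))
    by (apply Rdiv_lt_0_compat; [repeat apply Rmult_lt_0_compat|]; lra).
  exists (2 * delta * U * c / (c - a)). split; [exact HL0|].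
  intros L HL.
  assert (HLpos : 0 < L) by lra.
  assert (HLlong : 2 * delta * U * c <= L * (c - a)).
  { apply (Rmult_le_compat_r (c - a)) in HL; [|lra].
    replace (2 * delta * U * c / (c - a) * (c - a)) with (2 * delta * U * c) in HL
      by (field; lra). lra. }
  pose proof (balanced_cycle_gt_lost_time L HLpos) as HTs.
  pose proof (balanced_cycle_balance L HLpos) as Hbalance.
  pose proof (balanced_cycle_trips L Hmoderate HLlong) as Hxs.
  set (Ts := balanced_cycle L) in *. set (xs := L / (U * Ts)) in *.
  assert (Hvalue : reduced_flow a U c delta pi0 L Ts = a * xs).
  { unfold reduced_flow. fold xs.
    rewrite throughput_ratio_lt_1, Rmax_right, Hbalance by lra. apply Rmin_left. lra. }
  apply maximizer_from_strict; [lra|].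
  intros T HT Hne. rewrite Hvalue. unfold reduced_flow.
  destruct (Rtotal_order T Ts) as [Hlt|[Heq|Hgt]]; [|contradiction|].
  - eapply Rle_lt_trans; [apply Rmin_r|]. rewrite <- Hbalance.
    assert (2 * delta / Ts < 2 * delta / T).
    { unfold Rdiv. apply Rmult_lt_compat_l; [lra|]. apply Rinv_lt_contravar; nra. }
    apply Rmult_lt_compat_r; [lra|]. apply Rmult_lt_compat_r; lra.
  - eapply Rle_lt_trans; [apply Rmin_l|].
    assert (Hxpos : 0 < L / (U * T)) by (apply Rdiv_lt_0_compat; nra).
    assert (Hxlt : L / (U * T) < xs).
    { unfold xs, Rdiv. apply Rmult_lt_compat_l; [lra|].
      apply Rinv_lt_contravar; [repeat apply Rmult_lt_0_compat|apply Rmult_lt_compat_l]; lra. }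
    rewrite throughput_ratio_lt_1 by lra.
    apply Rmult_lt_compat_l; [lra|]. apply Rmax_lub_lt; lra.
Qed.

Lemma reduced_flow_regimes : a < c ->
  exists L0, 0 < L0 /\ forall L, L0 <= L ->
    (a < pi0 * c -> forall T,
       maximizer_from (2 * delta) (reduced_flow a U c delta pi0 L) T <->
       exists j, (0 < j)%nat /\ T = / INR j * (L / U) /\ a <= (1 - 2 * delta / T) * pi0 * c) /\
    (pi0 * c <= a -> forall T,
       maximizer_from (2 * delta) (reduced_flow a U c delta pi0 L) T <->
       T = balanced_cycle L).
Proof.
  intros Hac. destruct (Rlt_le_dec a (pi0 * c)) as [Hlight|Hmoderate].
  - destruct (reduced_flow_maximizers_light Hlight) as (L0 & HL0 & Hopt).
    exists L0. split; auto. intros L HL. split; [intros _; auto | intros; lra].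
  - destruct (reduced_flow_maximizer_moderate (conj Hmoderate Hac)) as (L0 & HL0 & Hopt).
    exists L0. split; auto. intros L HL. split; [intros; lra | intros _; auto].
Qed.

End ReducedFlow.

Lemma Kbar_pos V W K : 0 < V -> 0 < W -> 0 < K -> 0 < Kbar V W K.
Proof. intros. unfold Kbar. apply Rmult_lt_0_compat; [apply Rdiv_lt_0_compat|]; lra. Qed.

Lemma Cap_pos V W K : 0 < V -> 0 < W -> 0 < K -> 0 < Cap V W K.
Proof. intros. unfold Cap. apply Rmult_lt_0_compat; [|apply Kbar_pos]; auto. Qed.

Lemma Cap_congested V W K : 0 < V -> 0 < W -> Cap V W K = (K - Kbar V W K) * W.
Proof. intros. unfold Cap, Kbar. field. lra. Qed.

Lemma phi1_eq L V W K k0 pi0 T : 0 < V -> 0 < W -> 0 < K -> 0 < pi0 < 1 -> 0 < L -> 0 < T ->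
  phi1 L V W K k0 pi0 T = V * k0 * throughput_ratio pi0 (L / (V * T)).
Proof.
  intros HV HW HK Hp HL HT.
  assert (Hx : 0 < L / (V * T)) by (apply Rdiv_lt_0_compat; nra).
  pose proof (effective_cycles_pos pi0 _ Hp Hx) as Hm.
  pose proof (Kbar_pos V W K HV HW HK).
  unfold phi1, k1, throughput_ratio, effective_cycles, Cap in *. cbv zeta.
  rewrite jfl_add_alf. field. repeat split; lra.
Qed.

Lemma phi2_eq L V W K k0 pi0 T : 0 < V -> 0 < W -> 0 < K -> 0 < pi0 < 1 -> 0 < L -> 0 < T ->
  phi2 L V W K k0 pi0 T = (K - k0) * W * throughput_ratio pi0 (L / (W * T)).
Proof.
  intros HV HW HK Hp HL HT.
  assert (Hx : 0 < L / (W * T)) by (apply Rdiv_lt_0_compat; nra).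
  pose proof (effective_cycles_pos pi0 _ Hp Hx) as Hm.
  pose proof (Cap_pos V W K HV HW HK).
  unfold phi2, k2, throughput_ratio, effective_cycles in *. cbv zeta.
  rewrite jfl_add_alf. set (C := Cap V W K) in *.
  set (m := jfl (L / (W * T)) + Rmin (alf (L / (W * T)) / pi0) 1) in *.
  clearbody m C.
  assert (0 < m * T * pi0 * C) by (repeat apply Rmult_lt_0_compat; lra).
  field. repeat split; lra.
Qed.

Lemma green_capacity_lt_flow a c delta pi0 x T : 0 < delta -> 0 < T -> 0 < c <= a ->
  0 < pi0 < 1 -> 0 < x -> (1 - 2 * delta / T) * pi0 * c < a * throughput_ratio pi0 x.
Proof.
  intros Hd HT Hca Hp Hx. pose proof (throughput_ratio_bounds pi0 x Hp Hx).
  assert (0 < 2 * delta / T) by (apply Rdiv_lt_0_compat; lra).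
  assert (c * pi0 <= a * throughput_ratio pi0 x) by (apply Rmult_le_compat; lra).
  assert (0 < 2 * delta / T * pi0 * c) by (apply Rmult_lt_0_compat; [apply Rmult_lt_0_compat|]; lra).
  lra.
Qed.

Section Traffic.

Variables (L V W K k0 delta pi0 : R).
Hypotheses (HL : 0 < L) (HV : 0 < V) (HW : 0 < W) (HK : 0 < K) (Hdelta : 0 < delta)
  (Hpi0 : 0 < pi0 < 1).

Lemma gbar_sparse T : 0 < T -> k0 <= Kbar V W K ->
  gbar L V W K k0 delta pi0 T = reduced_flow (V * k0) V (Cap V W K) delta pi0 L T.
Proof.
  intros HT Hk. unfold gbar, reduced_flow. rewrite phi1_eq, phi2_eq by auto.
  apply Rmin_left. eapply Rle_trans; [apply Rmin_r|]. left.
  apply green_capacity_lt_flow; auto.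
  - pose proof (Cap_pos V W K HV HW HK). pose proof (Cap_congested V W K HV HW). split; nra.
  - apply Rdiv_lt_0_compat; nra.
Qed.

Lemma gbar_dense T : 0 < T -> Kbar V W K <= k0 ->
  gbar L V W K k0 delta pi0 T = reduced_flow ((K - k0) * W) W (Cap V W K) delta pi0 L T.
Proof.
  intros HT Hk. unfold gbar, reduced_flow. rewrite phi1_eq, phi2_eq by auto.
  rewrite (Rmin_right (V * k0 * _)), Rmin_comm; auto. left.
  apply green_capacity_lt_flow; auto.
  - pose proof (Cap_pos V W K HV HW HK). unfold Cap in *. split; nra.
  - apply Rdiv_lt_0_compat; nra.
Qed.

Lemma gbar_critical T : 0 < T -> k0 = Kbar V W K ->
  gbar L V W K k0 delta pi0 T = (1 - 2 * delta / T) * pi0 * Cap V W K.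
Proof.
  intros HT Hk. rewrite gbar_sparse by lra. unfold reduced_flow.
  apply Rmin_right. left. apply green_capacity_lt_flow; auto.
  - pose proof (Cap_pos V W K HV HW HK). unfold Cap in *. rewrite Hk. lra.
  - apply Rdiv_lt_0_compat; nra.
Qed.

Lemma optimal_cycle_reduced_sparse T : k0 <= Kbar V W K ->
  optimal_cycle L V W K k0 delta pi0 T <->
  maximizer_from (2 * delta) (reduced_flow (V * k0) V (Cap V W K) delta pi0 L) T.
Proof. intros Hk. apply maximizer_from_ext. intros T' HT'. apply gbar_sparse; auto; lra. Qed.

Lemma optimal_cycle_reduced_dense T : Kbar V W K <= k0 ->
  optimal_cycle L V W K k0 delta pi0 T <->
  maximizer_from (2 * delta) (reduced_flow ((K - k0) * W) W (Cap V W K) delta pi0 L) T.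
Proof. intros Hk. apply maximizer_from_ext. intros T' HT'. apply gbar_dense; auto; lra. Qed.

End Traffic.

Lemma optimal_at_infinity_lost_time f delta P : 0 < delta -> 0 < P ->
  (forall T, 2 * delta <= T -> f T = (1 - 2 * delta / T) * P) ->
  optimal_at_infinity f delta.
Proof.
  intros Hd HP Hf. exists P. split; [|split].
  - intros T HT. rewrite Hf by auto.
    assert (0 < 2 * delta / T) by (apply Rdiv_lt_0_compat; lra). nra.
  - intros M. set (M' := Rmax (2 * delta) M).
    assert (HM' : 2 * delta <= M') by apply Rmax_l.
    exists (2 * delta / M' * P). split.
    { apply Rmult_lt_0_compat; [apply Rdiv_lt_0_compat|]; lra. }
    intros T [HT HTM]. rewrite Hf by auto.
    assert (HTM' : T <= M') by (eapply Rle_trans; [exact HTM | apply Rmax_r]).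
    assert (2 * delta / M' <= 2 * delta / T).
    { unfold Rdiv. apply Rmult_le_compat_l; [lra|]. apply Rinv_le_contravar; lra. }
    replace (P - 2 * delta / M' * P) with ((1 - 2 * delta / M') * P) by ring.
    apply Rmult_le_compat_r; lra.
  - intros eps Heps. exists (Rmax (2 * delta) (2 * delta * P / eps) + 1). intros T HT.
    assert (HT0 : 2 * delta < T) by (pose proof (Rmax_l (2 * delta) (2 * delta * P / eps)); lra).
    assert (HTe : 2 * delta * P / eps < T)
      by (pose proof (Rmax_r (2 * delta) (2 * delta * P / eps)); lra).
    rewrite Hf by lra.
    assert (Hsmall : 2 * delta * P / T < eps).
    { apply (Rmult_lt_reg_r T); [lra|].
      replace (2 * delta * P / T * T) with (2 * delta * P) by (field; lra).
      apply (Rmult_lt_compat_r eps) in HTe; [|lra].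
      replace (2 * delta * P / eps * eps) with (2 * delta * P) in HTe by (field; lra).
      lra. }
    replace ((1 - 2 * delta / T) * P) with (P - 2 * delta * P / T) by (field; lra).
    lra.
Qed.

Lemma chi_sparse V W K k0 : 0 < V -> 0 < W -> k0 <= Kbar V W K ->
  chi V W K k0 = V * k0 / Cap V W K.
Proof.
  intros HV HW Hk. pose proof (Cap_congested V W K HV HW).
  unfold chi. rewrite Rmin_left, Rmin_left; auto; [nra|]. unfold Cap. nra.
Qed.

Lemma chi_dense V W K k0 : 0 < V -> 0 < W -> Kbar V W K <= k0 ->
  chi V W K k0 = Cap V W K / ((K - k0) * W).
Proof.
  intros HV HW Hk. pose proof (Cap_congested V W K HV HW).
  unfold chi. rewrite Rmin_right, Rmin_right; auto; [nra|]. unfold Cap. nra.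
Qed.

Lemma sparse_regimes V W K k0 delta pi0 :
  0 < V -> 0 < W -> 0 < K -> 0 < k0 -> 0 < delta -> 0 < pi0 < 1 -> k0 < Kbar V W K ->
  chi V W K k0 < 1 /\
  exists L0, 0 < L0 /\ forall L, L0 <= L ->
    (chi V W K k0 < pi0 -> forall T,
       optimal_cycle L V W K k0 delta pi0 T <->
       exists j : nat, (0 < j)%nat /\ T = / INR j * (L / V) /\
         V * k0 <= (1 - 2 * delta / T) * pi0 * Cap V W K) /\
    (pi0 <= chi V W K k0 < 1 -> forall T,
       optimal_cycle L V W K k0 delta pi0 T <->
       T = chi V W K k0 * (L / (pi0 * V)) + 2 * delta).
Proof.
  intros HV HW HK Hk0 Hd Hp Hk.
  pose proof (Cap_pos V W K HV HW HK) as HC.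
  assert (Hdemand : V * k0 < Cap V W K) by (unfold Cap in *; nra).
  rewrite chi_sparse by lra.
  assert (Hratio : V * k0 / Cap V W K * Cap V W K = V * k0) by (field; lra).
  split; [nra|].
  destruct (reduced_flow_regimes (V * k0) V (Cap V W K) delta pi0) as (L0 & HL0 & Hreg);
    try nra.
  exists L0. split; auto. intros L HL. destruct (Hreg L HL) as [Hlight Hmoderate].
  split.
  - intros Hx T. rewrite optimal_cycle_reduced_sparse by lra. apply Hlight. nra.
  - intros [Hx _] T. rewrite optimal_cycle_reduced_sparse by lra. apply Hmoderate. nra.
Qed.

Lemma dense_regimes V W K k0 delta pi0 :
  0 < V -> 0 < W -> 0 < K -> k0 < K -> 0 < delta -> 0 < pi0 < 1 -> Kbar V W K < k0 ->
  1 < chi V W K k0 /\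
  exists L0, 0 < L0 /\ forall L, L0 <= L ->
    (1 < chi V W K k0 <= / pi0 -> forall T,
       optimal_cycle L V W K k0 delta pi0 T <->
       T = / chi V W K k0 * (L / (pi0 * W)) + 2 * delta) /\
    (/ pi0 < chi V W K k0 -> forall T,
       optimal_cycle L V W K k0 delta pi0 T <->
       exists j : nat, (0 < j)%nat /\ T = / INR j * (L / W) /\
         (K - k0) * W <= (1 - 2 * delta / T) * pi0 * Cap V W K).
Proof.
  intros HV HW HK Hk0 Hd Hp Hk.
  pose proof (Cap_pos V W K HV HW HK) as HC.
  pose proof (Cap_congested V W K HV HW) as HCW.
  assert (Hdemand : 0 < (K - k0) * W < Cap V W K) by nra.
  rewrite chi_dense, Rinv_div by lra.
  assert (Hratio : Cap V W K / ((K - k0) * W) * ((K - k0) * W) = Cap V W K) by (field; lra).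
  assert (Hpinv : pi0 * / pi0 = 1) by (field; lra).
  split; [nra|].
  destruct (reduced_flow_regimes ((K - k0) * W) W (Cap V W K) delta pi0) as (L0 & HL0 & Hreg);
    try lra.
  exists L0. split; auto. intros L HL. destruct (Hreg L HL) as [Hlight Hmoderate].
  split.
  - intros [_ Hx] T. rewrite optimal_cycle_reduced_dense by lra. apply Hmoderate.
    assert (Cap V W K <= / pi0 * ((K - k0) * W))
      by (rewrite <- Hratio at 1; apply Rmult_le_compat_r; lra).
    apply (Rmult_le_compat_l pi0) in H; [|lra].
    rewrite <- Rmult_assoc, Hpinv, Rmult_1_l in H. exact H.
  - intros Hx T. rewrite optimal_cycle_reduced_dense by lra. apply Hlight.
    assert (/ pi0 * ((K - k0) * W) < Cap V W K)
      by (rewrite <- Hratio at 1; apply Rmult_lt_compat_r; lra).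
    apply (Rmult_lt_compat_l pi0) in H; [|lra].
    rewrite <- Rmult_assoc, Hpinv, Rmult_1_l in H. exact H.
Qed.

Lemma critical_regime L V W K delta pi0 :
  0 < L -> 0 < V -> 0 < W -> 0 < K -> 0 < delta -> 0 < pi0 < 1 ->
  chi V W K (Kbar V W K) = 1 /\
  optimal_at_infinity (gbar L V W K (Kbar V W K) delta pi0) delta.
Proof.
  intros HL HV HW HK Hd Hp. pose proof (Cap_pos V W K HV HW HK) as HC.
  split.
  - rewrite chi_sparse by lra. apply Rdiv_diag. lra.
  - apply (optimal_at_infinity_lost_time _ _ (pi0 * Cap V W K)); [lra|nra|].
    intros T HT. rewrite gbar_critical by (auto; lra). ring.
Qed.

Theorem corollary4p2 :
  forall (V W K k0 delta pi0 : R),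
    0 < V -> 0 < W -> 0 < K -> 0 < k0 < K -> 0 < delta -> 0 < pi0 < 1 ->
    exists L0 : R, 0 < L0 /\
    forall L : R, L0 <= L ->
      let C := Cap V W K in
      let x := chi V W K k0 in
      (* (1) very sparse *)
      (x < pi0 ->
         forall T, optimal_cycle L V W K k0 delta pi0 T <->
           exists j : nat, (0 < j)%nat /\ T = / INR j * (L / V) /\
             V * k0 <= (1 - 2 * delta / T) * pi0 * C) /\
      (* (2) sparse *)
      (pi0 <= x < 1 ->
         forall T, optimal_cycle L V W K k0 delta pi0 T <->
           T = x * (L / (pi0 * V)) + 2 * delta) /\
      (* (3) critical *)
      (x = 1 ->
         optimal_at_infinity (gbar L V W K k0 delta pi0) delta) /\
      (* (4) dense *)
      (1 < x <= / pi0 ->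
         forall T, optimal_cycle L V W K k0 delta pi0 T <->
           T = / x * (L / (pi0 * W)) + 2 * delta) /\
      (* (5) very dense *)
      (/ pi0 < x ->
         forall T, optimal_cycle L V W K k0 delta pi0 T <->
           exists j : nat, (0 < j)%nat /\ T = / INR j * (L / W) /\
             (K - k0) * W <= (1 - 2 * delta / T) * pi0 * C).
Proof.
  intros V W K k0 delta pi0 HV HW HK Hk0 Hd Hp.
  assert (Hinv : 1 < / pi0) by (rewrite <- Rinv_1; apply Rinv_lt_contravar; lra).
  destruct (Rtotal_order k0 (Kbar V W K)) as [Hs|[Hc|Hdn]].
  - destruct (sparse_regimes V W K k0 delta pi0) as [Hchi (L0 & HL0 & Hreg)]; try lra.
    exists L0. split; auto. intros L HL. destruct (Hreg L HL) as [Hvsparse Hsparse].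
    refine (conj Hvsparse (conj Hsparse (conj _ (conj _ _)))); intros; exfalso; lra.
  - subst k0. exists 1. split; [lra|]. intros L HL.
    destruct (critical_regime L V W K delta pi0) as [Hchi Hinf]; try lra.
    refine (conj _ (conj _ (conj (fun _ => Hinf) (conj _ _)))); intros; exfalso; lra.
  - destruct (dense_regimes V W K k0 delta pi0) as [Hchi (L0 & HL0 & Hreg)]; try lra.
    exists L0. split; auto. intros L HL. destruct (Hreg L HL) as [Hdense Hvdense].
    refine (conj _ (conj _ (conj _ (conj Hdense Hvdense)))); intros; exfalso; lra.
Qed.
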